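(* Let $K$ be a compact metric space and $\{\mu_j\}$ a sequence of finite positive regular Borel measures on $K$ converging weak-* in $C(K)^*$ to a finite positive Borel measure $\mu$. Suppose $\operatorname{supp}\mu_j\cap\operatorname{supp}\mu=\emptyset$ for all $j$. Then the measures $\mu_j$ converge weak-* to $\mu$ regularly.
   Context: Weak-* convergence means $\int h\,d\mu_j\to\int h\,d\mu$ for all $h\in C(K)$. The convergence is called regular if, in addition, for every $\mu$-measurable set $A\subset K_0=\operatorname{supp}\mu$ and every $\varepsilon>0$ there are an open set $O\subset K$ with $A\subset O$ and an index $j_0$ such that $\mu_j(O)<\mu(A)+\varepsilon$ for all $j\ge j_0$. *)

From HB Require Import structures.
From mathcomp Require Import all_boot all_order all_algebra.
From mathcomp Require Import all_classical all_reals all_analysis.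
Set Implicit Arguments. Unset Strict Implicit. Unset Printing Implicit Defensive.
Import Order.TTheory GRing.Theory Num.Theory numFieldNormedType.Exports.
Local Open Scope classical_set_scope.
Local Open Scope ring_scope.

(* Metric spaces with a distinguished point (i.e. nonempty), needed so that
   the Borel sigma-algebra yields a measurableType. *)
#[short(type="pmetricType")]
HB.structure Definition PointedMetric (K : numDomainType) :=
  { M of Metric K M & isPointed M }.

Definition borelType (T : ptopologicalType) := g_sigma_algebraType (@open T).

Section defs.
Context {R : realType} {T : ptopologicalType}.
Local Notation B := (borelType T).

Definition msupp (mu : set B -> \bar R) : set T :=
  [set x | forall O : set T, open O -> O x -> (0 < mu O)%E].

Definition regular_measure (mu : set B -> \bar R) : Prop :=
  forall A : set B, measurable A ->
    mu A = ereal_inf [set mu O | O in [set O : set T | open O /\ A `<=` O]] /\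
    mu A = ereal_sup [set mu C | C in [set C : set T | compact C /\ C `<=` A]].

Definition weak_star_cvg (mu_ : nat -> {measure set B -> \bar R})
  (mu : {measure set B -> \bar R})
  : Prop :=
  forall h : T -> R, continuous h ->
    (fun j => (\int[mu_ j]_x (h x)%:E)%E) @ \oo --> (\int[mu]_x (h x)%:E)%E.

(* [mu_meas_val mu A a]: A is mu-measurable (i.e. measurable for the
   completion of mu) and its completed measure is a. *)
Definition mu_meas_val (mu : set B -> \bar R) (A : set T) (a : \bar R) : Prop :=
  exists (Bs N : set B), [/\ measurable Bs, measurable N, mu N = 0%E,
    (A `\` Bs) `|` (Bs `\` A) `<=` N & mu Bs = a].

Definition regular_weak_star_cvg (mu_ : nat -> {measure set B -> \bar R})
  (mu : {measure set B -> \bar R}) : Prop :=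
  weak_star_cvg mu_ mu /\
  forall (A : set T) (a : \bar R), A `<=` msupp mu -> mu_meas_val mu A a ->
  forall eps : R, 0 < eps ->
  exists O : set T, [/\ open O, A `<=` O &
    exists j0 : nat, forall j, (j0 <= j)%N -> (mu_ j O < a + eps%:E)%E].
End defs.

From HB Require Import structures.
From mathcomp Require Import all_boot all_order all_algebra.
From mathcomp Require Import all_classical all_reals all_analysis.
From mathcomp Require Import measurable_realfun lra.
Import Order.TTheory GRing.Theory Num.Theory numFieldNormedType.Exports.
Local Open Scope classical_set_scope.
Local Open Scope ring_scope.

(* Finite Borel measures on a metric space are outer regular, so A has an open
   neighbourhood U = {g > 0}, g continuous, with mu(U) < mu(A) + eps.  The
   cutoffs phi_m = min(1, (m+1) g) satisfy int phi_m dmu <= mu(U), hence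
   int phi_m dmu_j < mu(A) + eps for j >= J(m).  Let m(j) = diag_index J j,
   which tends to oo slowly enough that J(m(j)) <= j, and remove from U the
   closed sets supp mu_j /\ {g <= 1/(m(j)+1)}: they accumulate only where
   g = 0, so what is left is an open set O; it contains A because supp mu_j
   misses supp mu, and since mu_j is carried by supp mu_j,
   mu_j(O) <= mu_j{g >= 1/(m(j)+1)} <= int phi_(m(j)) dmu_j < mu(A) + eps. *)

Section diagonal_index.
Variable J : nat -> nat.

Fixpoint diag_index (j : nat) : nat :=
  if j is j'.+1 then
    if (J (diag_index j').+1 <= j'.+1)%N then (diag_index j').+1 else diag_index j'
  else 0.

Lemma diag_index_leS j : (diag_index j <= diag_index j.+1)%N.
Proof. by rewrite /=; case: ifP. Qed.

Lemma diag_index_homo : {homo diag_index : i j / (i <= j)%N}.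
Proof. by apply: homo_leq => //; [exact: leq_trans | exact: diag_index_leS]. Qed.

Lemma diag_index_le j : (J 0 <= j)%N -> (J (diag_index j) <= j)%N.
Proof.
suff [->|//] : diag_index j = 0%N \/ (J (diag_index j) <= j)%N by [].
elim: j => [|j [IH|IH]] /=; first by left.
- by case: ifP => h; [right | left].
- by case: ifP => h; right => //; apply: leq_trans IH _.
Qed.

Lemma diag_index_cvg : diag_index @ \oo --> \oo.
Proof.
apply/cvgnyPge; elim=> [|k [N _ kN]]; first by near=> j.
pose N' := maxn N (J k.+1).
have kN' : (k <= diag_index N')%N by apply: kN; rewrite /= leq_maxl.
have kSN' : (k.+1 <= diag_index N'.+1)%N.
  have [lt|ge] := ltnP k (diag_index N'); first exact: leq_trans lt (diag_index_leS _).
  have eqk : diag_index N' = k by apply/eqP; rewrite eqn_leq ge kN'.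
  by rewrite /= eqk ifT // leqW // leq_maxr.
by exists N'.+1 => // j /= /diag_index_homo; apply: leq_trans.
Unshelve. all: by end_near.
Qed.
End diagonal_index.

Section metric_zero_sets.
Context {R : realType} {K : metricType R}.

Lemma closed_zero_set {F : set K} : closed F ->
  exists g : K -> R, [/\ continuous g, forall x, 0 <= g x & forall x, g x = 0 <-> F x].
Proof.
move=> cF; have [->|/set0P [y0 Fy0]] := eqVneq F set0.
  exists (fun=> 1); split => // [x|x]; first exact: cvg_cst.
  by split => // /eqP; rewrite oner_eq0.
pose D x := [set mdist x y | y in F].
have D_lb x : has_lbound (D x) by exists 0 => _ [y _ <-]; exact: mdist_ge0.
have D_n0 x : nonempty (D x) by exists (mdist x y0), y0.
pose g x := inf (D x).
have g_ge0 x : 0 <= g x by apply: lb_le_inf => // _ [y _ <-]; exact: mdist_ge0.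
have g_lip x x' : g x <= mdist x x' + g x'.
  rewrite addrC -lerBlDr; apply: lb_le_inf => // _ [y Fy <-].
  have : g x <= mdist x y by apply: ge_inf => //; exists y.
  have := metric_triangle x x' y; lra.
exists g; split => // x.
- apply/cvgrPdist_lt => e e0; have := nbhsx_ballx x e e0.
  apply: filterS => y; rewrite ballEmdist /= => xy.
  have := g_lip x y; have := g_lip y x; rewrite metric_sym => h1 h2.
  rewrite ltr_norml; apply/andP; split; lra.
- split=> [gx0|Fx]; last first.
    by apply/eqP; rewrite eq_le g_ge0 andbT -(mdistxx x); apply: ge_inf => //; exists x.
  apply: cF => V /nbhs_ballP [e e0 eV].
  have [_ [y Fy <-] ye] : exists2 r, D x r & r < e.
    by apply: inf_lt => //; rewrite /g in gx0; rewrite gx0.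
  by exists y; split => //; apply: eV; rewrite ballEmdist.
Qed.

Lemma open_positivity_set {U : set K} : open U ->
  exists g : K -> R, [/\ continuous g, forall x, 0 <= g x & [set x | 0 < g x] = U].
Proof.
move=> oU; have [g [cg g_ge0 gU]] := closed_zero_set (open_closedC oU).
exists g; split => //; apply/seteqP; split => x /=.
- by move=> gx; apply: contrapT => /(gU x).2 gx0; rewrite gx0 ltxx in gx.
- by move=> Ux; rewrite lt_neqAle g_ge0 andbT eq_sym; apply/eqP => /(gU x); apply.
Qed.
End metric_zero_sets.

Section borel_support.
Context {R : realType} {T : ptopologicalType}.
Local Notation B := (borelType T).

Lemma open_borel {U : set T} : open U -> measurable (U : set B).
Proof. by move=> oU; apply: sub_gen_smallest. Qed.

Lemma closed_borel {C : set T} : closed C -> measurable (C : set B).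
Proof.
by move=> cC; rewrite -[C]setCK; apply: measurableC; apply: open_borel; exact: closed_openC.
Qed.

Lemma continuous_borel_measurable (f : T -> R) : continuous f ->
  measurable_fun [set: B] (f : B -> R).
Proof.
move=> /continuousP cf.
apply: (measurability _ (RGenOpens.measurableE R)).
by move=> _ [_ [a [b ->] <-]]; rewrite setTI; apply: open_borel; exact/cf/interval_open.
Qed.

Lemma msuppNP (mu : {measure set B -> \bar R}) x :
  ~ msupp mu x -> exists W : set T, [/\ open W, W x & mu W = 0%E].
Proof.
move=> nx; apply: contrapT => nW; apply: nx => W oW Wx.
by rewrite lt0e measure_ge0 andbT; apply/eqP => mW; apply: nW; exists W.
Qed.

Lemma msupp_closed (mu : {measure set B -> \bar R}) : closed (msupp mu).
Proof.
rewrite -[msupp mu]setCK; apply: open_closedC.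
set O := ~` _; rewrite openE => x /msuppNP [W [oW Wx mW]].
apply: filterS (open_nbhs_nbhs (conj oW Wx)) => y Wy suppy.
by have := suppy W oW Wy; rewrite mW ltxx.
Qed.

Lemma measurable_msuppC (mu : {measure set B -> \bar R}) : measurable (~` msupp mu : set B).
Proof. by apply: open_borel; apply: closed_openC; exact: msupp_closed. Qed.

Lemma measure_bigsetU_null (mu : {measure set B -> \bar R}) (I : eqType) (s : seq I)
    (F : I -> set B) : (forall i, measurable (F i)) ->
  (forall i, i \in s -> mu (F i) = 0%E) -> mu (\big[setU/set0]_(i <- s) F i) = 0%E.
Proof.
move=> mF; elim: s => [|i s IH] Fs0; first by rewrite big_nil measure0.
rewrite big_cons; apply: null_set_setU => //.
- by apply: bigsetU_measurable => j _.
- by apply: Fs0; rewrite mem_head.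
- by apply: IH => j js; apply: Fs0; rewrite in_cons js orbT.
Qed.

Lemma measure_msuppC (mu : {measure set B -> \bar R}) :
  hausdorff_space T -> regular_measure mu -> mu (~` msupp mu) = 0%E.
Proof.
move=> hT reg; apply/eqP; rewrite eq_le measure_ge0 andbT (reg _ (measurable_msuppC mu)).2.
apply: ge_ereal_sup => _ [C [cC CS] <-].
have /choice [W hW] : forall x, exists W : set T, open W /\ (C x -> W x /\ mu W = 0%E).
  move=> x; have [Cx|nCx] := pselect (C x); last by exists set0; split => //; exact: open0.
  by have [W [oW Wx mW]] := @msuppNP mu x (CS x Cx); exists W.
have := cC; rewrite compact_cover => /(_ T C W (fun x _ => (hW x).1)).
case=> [x Cx|D DC CD]; first by exists x => //; exact: ((hW x).2 Cx).1.
have DC' i : i \in finmap.enum_fset D -> C i by move=> /DC; rewrite inE.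
have mW i : measurable (W i : set B) by exact: open_borel (hW i).1.
rewrite -(@measure_bigsetU_null mu _ (finmap.enum_fset D) W mW); last first.
  by move=> i /DC' Ci; exact: ((hW i).2 Ci).2.
apply: le_measure; rewrite ?inE; last by rewrite -bigcup_fset.
- exact: closed_borel (compact_closed hT cC).
- exact: bigsetU_measurable.
Qed.

Lemma le_measure_msuppC (mu : {measure set B -> \bar R}) (O S : set B) :
  hausdorff_space T -> regular_measure mu -> measurable O -> measurable S ->
  O `<=` ~` msupp mu `|` S -> (mu O <= mu S)%E.
Proof.
move=> hT reg mO mS OS; have mN := measurable_msuppC mu.
apply: le_trans (le_measure _ _ _ OS) _; rewrite ?inE //; first exact: measurableU.
apply: le_trans (measureU2 mu mN mS) _.
(* [measureU2] bounds the underlying content of [mu], hence the conversion. *)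
by rewrite -[X in (X + _)%E]/(mu (~` msupp mu)) (measure_msuppC mu hT reg) add0e.
Qed.
End borel_support.

Section measure_bounds.
Context {d : measure_display} {T : measurableType d} {R : realType}.

Lemma measure_bigcup_epsilon_trick (mu : {measure set T -> \bar R})
    {A : (set T)^nat} {e : R} : 0 <= e ->
  (forall n, measurable (A n)) -> (forall n, (mu (A n) <= (e / (2 ^ n.+1)%:R)%:E)%E) ->
  (mu (\bigcup_n A n) <= e%:E)%E.
Proof.
move=> e0 mA Ae; have mUA : measurable (\bigcup_n A n) by exact: bigcup_measurable.
apply: le_trans (measure_sigma_subadditive mu mA mUA (@subset_refl _ _)) _.
apply: le_trans (epsilon_trick0 xpredT e0).
by apply: lee_nneseries => [n _ _|n _]; [exact: measure_ge0 | exact: Ae].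
Qed.

Lemma measure_bigcup_setD_lt (mu : {finite_measure set T -> \bar R}) {F : (set T)^nat} :
  (forall n, measurable (F n)) -> nondecreasing_seq F ->
  forall e : R, 0 < e -> exists N, (mu (\bigcup_n F n `\` F N) < e%:E)%E.
Proof.
move=> mF ndF e e0; pose G n := \bigcup_k F k `\` F n.
have mUF : measurable (\bigcup_k F k) by exact: bigcup_measurable.
have mG n : measurable (G n) by exact: measurableD.
have ndG : nonincreasing_seq G.
  move=> n m nm; apply/subsetPset => x [UFx nFmx]; split => // Fnx.
  by apply: nFmx; move/subsetPset: (ndF _ _ nm); apply.
have G0 : \bigcap_n G n = set0.
  apply/seteqP; split => // x Gx; have [[k _ Fkx] _] := Gx 0%N I.
  by have [_] := Gx k I.
have G0fin : (mu (G 0%N) < +oo)%E.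
  by rewrite -ge0_fin_numE ?measure_ge0 // fin_num_measure.
have e0' : (0%:E < e%:E)%E by rewrite lte_fin.
have := nonincreasing_cvg_mu G0fin mG (bigcapT_measurable mG) ndG.
rewrite G0 measure0 => /(_ _ (open_ereal_lt' e0')) [N _ GN].
by exists N; exact: GN N (leqnn N).
Qed.

Lemma measure_bigcupD_partial_lt (mu : {finite_measure set T -> \bar R})
    {C U : (set T)^nat} : (forall n, measurable (C n)) -> (forall n, measurable (U n)) ->
  forall e : R, 0 < e -> (forall n, (mu (U n `\` C n) < (e / 2 / (2 ^ n.+1)%:R)%:E)%E) ->
  exists N, (mu (\bigcup_n U n `\` \bigcup_(i in `I_N) C i) < e%:E)%E.
Proof.
move=> mC mU e e0 UC; have e2 : 0 < e / 2 by rewrite divr_gt0.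
pose P N := \bigcup_(i in `I_N) C i.
have mP N : measurable (P N) by apply: bigcup_measurable => i _.
have ndP : nondecreasing_seq P.
  move=> n m nm; apply/subsetPset => x [i /= ilt Cix]; exists i => //=.
  exact: leq_trans ilt nm.
have [N PN] := measure_bigcup_setD_lt mu mP ndP _ e2; exists N.
have UPN : \bigcup_n U n `\` P N `<=` \bigcup_n (U n `\` C n) `|` (\bigcup_n P n `\` P N).
  move=> x [[n _ Unx] nPx]; have [Cnx|nCnx] := pselect (C n x); last by left; exists n.
  by right; split => //; exists n.+1 => //; exists n => /=.
have mUC n : measurable (U n `\` C n) by exact: measurableD.
have mUCU : measurable (\bigcup_n (U n `\` C n)) by exact: bigcup_measurable.
have mPN : measurable (\bigcup_n P n `\` P N) by apply/measurableD/mP/bigcup_measurable.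
have mUPN : measurable (\bigcup_n U n `\` P N) by apply/measurableD/mP/bigcup_measurable.
have UC_le : (mu (\bigcup_n (U n `\` C n)) <= (e / 2)%:E)%E.
  by apply: (measure_bigcup_epsilon_trick mu (ltW e2) mUC) => n; exact: ltW (UC n).
apply: le_lt_trans (le_measure mu (mem_set mUPN) (mem_set (measurableU _ _ mUCU mPN)) UPN) _.
apply: le_lt_trans (measureU2 mu mUCU mPN) _.
by rewrite [e]splitr EFinD lee_ltD // fin_num_measure.
Qed.

Lemma measure_le_integral (mu : {measure set T -> \bar R}) {E : set T} {f : T -> R} :
  measurable E -> measurable_fun [set: T] f -> (forall x, 0 <= f x) ->
  (forall x, E x -> 1 <= f x) -> (mu E <= \int[mu]_x (f x)%:E)%E.
Proof.
move=> mE mf f_ge0 Ef1; rewrite -[X in (mu X <= _)%E]setIT -integral_indic //.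
apply: ge0_le_integral => //.
- by apply/measurable_EFinP; exact: measurable_indic.
- by apply/measurable_EFinP.
- by move=> x _; rewrite lee_fin indicE; case: (boolP (x \in E)) => [/set_mem/Ef1|].
Qed.

Lemma integral_le_measure (mu : {measure set T -> \bar R}) {E : set T} {f : T -> R} :
  measurable E -> measurable_fun [set: T] f -> (forall x, 0 <= f x) ->
  (forall x, f x <= 1) -> (forall x, ~ E x -> f x = 0) -> (\int[mu]_x (f x)%:E <= mu E)%E.
Proof.
move=> mE mf f_ge0 f_le1 fE0; rewrite -[X in (_ <= mu X)%E]setIT -integral_indic //.
apply: ge0_le_integral => //.
- by move=> x _; rewrite lee_fin.
- by apply/measurable_EFinP.
- by apply/measurable_EFinP; exact: measurable_indic.
- move=> x _; rewrite lee_fin indicE; case: (boolP (x \in E)) => // /negP nEx.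
  by rewrite fE0 // => Ex; apply: nEx; rewrite inE.
Qed.
End measure_bounds.

Section outer_regularity.
Context {R : realType} {K : pmetricType R}.
Local Notation B := (borelType K).
Variable mu : {finite_measure set B -> \bar R}.

Definition closed_open_approx (E : set K) := forall e : R, 0 < e ->
  exists C U : set K, [/\ closed C, open U, C `<=` E, E `<=` U & (mu (U `\` C) < e%:E)%E].

Lemma open_closed_open_approx (W : set K) : open W -> closed_open_approx W.
Proof.
move=> oW e e0; have [g [cg g_ge0 gW]] := open_positivity_set oW.
pose C n := [set x | harmonic n <= g x].
have cC n : closed (C n) by exact: ((continuous_closedP g).1 cg _ (@closed_ge _ (harmonic n))).
have CW n : C n `<=` W by rewrite -gW => x /= /(lt_le_trans (harmonic_gt0 n)).
have UC : \bigcup_n C n = W.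
  apply/seteqP; split => [x [n _ /CW]//|x]; rewrite -{1}gW => /= gx.
  have [N _ hN] := cvgr_lt 0 cvg_harmonic (g x) gx.
  by exists N => //; apply/ltW/hN => /=.
have ndC : nondecreasing_seq C.
  move=> n m nm; apply/subsetPset => x; rewrite /C /=; apply: le_trans.
  by rewrite lef_pV2 ?posrE ?ltr0n // ler_nat ltnS.
have [N CN] := measure_bigcup_setD_lt mu (fun n => closed_borel (cC n)) ndC _ e0.
by exists (C N), W; split => //; rewrite -UC.
Qed.

Lemma closed_open_approxC (E : set K) :
  closed_open_approx E -> closed_open_approx (~` E).
Proof.
move=> aE e e0; have [C [U [cC oU CE EU UC]]] := aE e e0.
exists (~` U), (~` C); split; [exact: open_closedC | exact: closed_openC | | |].
- exact: subsetC.
- exact: subsetC.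
- by rewrite setDE setCK setIC -setDE.
Qed.

Lemma closed_open_approx_bigcup (F : (set K)^nat) :
  (forall n, closed_open_approx (F n)) -> closed_open_approx (\bigcup_n F n).
Proof.
move=> aF e e0; have /choice [CU hCU] : forall n, exists CU : set K * set K,
    [/\ closed CU.1, open CU.2, CU.1 `<=` F n, F n `<=` CU.2 &
        (mu (CU.2 `\` CU.1) < (e / 2 / (2 ^ n.+1)%:R)%:E)%E].
  move=> n; have [|C [U hCU]] := aF n (e / 2 / (2 ^ n.+1)%:R).
    by rewrite !divr_gt0 // ltr0n expn_gt0.
  by exists (C, U).
pose C n := (CU n).1; pose U n := (CU n).2.
have cC n : closed (C n) by case: (hCU n).
have oU n : open (U n) by case: (hCU n).
have [|N UCN] := measure_bigcupD_partial_lt mu (fun n => closed_borel (cC n))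
  (fun n => open_borel (oU n)) _ e0; first by move=> n; case: (hCU n).
exists (\bigcup_(i in `I_N) C i), (\bigcup_n U n); split => //.
- by rewrite bigcup_mkord; apply: closed_bigsetU => i _; exact: cC.
- by apply: bigcup_open => n _; exact: oU.
- by move=> x [i _ Cix]; exists i => //; case: (hCU i) => _ _ + _ _; apply.
- by move=> x [i _ Fix]; exists i => //; case: (hCU i) => _ _ _ + _; apply.
Qed.

Lemma measurable_closed_open_approx {E : set B} : measurable E -> closed_open_approx E.
Proof.
move=> mE; suff : <<s (@open K) >> `<=` closed_open_approx by apply.
apply: smallest_sub; last exact: open_closed_open_approx.
split.
- move=> e e0; exists set0, set0; rewrite setD0 measure0 lte_fin.
  by split => //; [exact: closed0 | exact: open0].
- by move=> E' /closed_open_approxC; rewrite setTD.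
- exact: closed_open_approx_bigcup.
Qed.

Lemma outer_regular_measure {E : set B} : measurable E -> forall e : R, 0 < e ->
  exists U : set K, [/\ open U, E `<=` U & (mu U < mu E + e%:E)%E].
Proof.
move=> mE e e0; have [C [U [cC oU CE EU UC]]] := measurable_closed_open_approx mE _ e0.
exists U; split => //; have mU := open_borel oU; have mC := closed_borel cC.
rewrite (measureDI mu mU mC) addeC; apply: lee_ltD => //.
  by apply: fin_num_measure; exact: measurableI.
by apply: le_measure; rewrite ?inE //; [exact: measurableI | move=> x [_ /CE]].
Qed.

Lemma mu_meas_val_outer {A : set K} {a : \bar R} : mu_meas_val mu A a ->
  forall e : R, 0 < e -> exists U : set K, [/\ open U, A `<=` U & (mu U < a + e%:E)%E].
Proof.
case=> [Bs [N [mBs mN N0 ABN <-]]] e e0.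
have [U [oU BNU muU]] := outer_regular_measure (measurableU _ _ mBs mN) _ e0.
exists U; split => //; last by rewrite measureU0 in muU.
move=> x Ax; apply: BNU; have [Bx|nBx] := pselect (Bs x); first by left.
by right; apply: ABN; left.
Qed.
End outer_regularity.

Section cutoff.
Context {R : realType} {T : ptopologicalType}.
Local Notation B := (borelType T).
Variables (g : T -> R) (m : nat).
Hypotheses (cg : continuous g) (g_ge0 : forall x, 0 <= g x).

Definition cutoff (x : T) : R := Order.min 1 (m.+1%:R * g x).

Lemma cutoff_continuous : continuous cutoff.
Proof.
apply: min_fun_continuous => x; first exact: cvg_cst.
exact: cvgMl_tmp (cg x).
Qed.

Lemma cutoff_ge0 x : 0 <= cutoff x.
Proof. by rewrite /cutoff le_min ler01 mulr_ge0. Qed.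

Lemma cutoff_le1 x : cutoff x <= 1.
Proof. by rewrite /cutoff ge_min lexx. Qed.

Lemma cutoff_eq0 x : ~ 0 < g x -> cutoff x = 0.
Proof.
rewrite /cutoff lt_neqAle g_ge0 andbT => /negP; rewrite negbK => /eqP <-.
by rewrite mulr0; apply/min_idPr; exact: ler01.
Qed.

Lemma cutoff_eq1 x : harmonic m <= g x -> cutoff x = 1.
Proof.
by move=> gx; apply/min_idPl; rewrite -ler_pdivrMl ?ltr0Sn // mulr1.
Qed.

Lemma measure_le_integral_cutoff (mu : {measure set B -> \bar R}) :
  (mu [set x | (harmonic m <= g x)%R] <= \int[mu]_x (cutoff x)%:E)%E.
Proof.
apply: measure_le_integral.
- by apply: closed_borel; exact: (continuous_closedP g).1 cg _ (@closed_ge _ (harmonic m)).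
- by apply: continuous_borel_measurable; exact: cutoff_continuous.
- exact: cutoff_ge0.
- by move=> x /cutoff_eq1 ->.
Qed.

Lemma integral_cutoff_le_measure (mu : {measure set B -> \bar R}) :
  (\int[mu]_x (cutoff x)%:E <= mu [set x | (0 < g x)%R])%E.
Proof.
apply: integral_le_measure.
- by apply: open_borel; exact: (continuousP g).1 cg _ (@open_gt _ 0).
- by apply: continuous_borel_measurable; exact: cutoff_continuous.
- exact: cutoff_ge0.
- exact: cutoff_le1.
- exact: cutoff_eq0.
Qed.
End cutoff.

Lemma open_setD_bigcup_shrinking {R : realType} {T : topologicalType} (g : T -> R)
    (Z : nat -> set T) (del : nat -> R) :
  continuous g -> (forall j, closed (Z j)) -> (forall j, Z j `<=` [set x | g x <= del j]) ->
  del @ \oo --> 0 -> open ([set x | 0 < g x] `\` \bigcup_j Z j).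
Proof.
move=> cg cZ Zdel del0; rewrite openE => x [/= gx0 nZx].
have gx2 : 0 < g x / 2 by rewrite divr_gt0.
have [N _ delN] := cvgr_lt 0 del0 _ gx2.
have near_gx : \forall y \near x, g x / 2 < g y by apply: cvgr_gt (cg x) _ _; lra.
have near_nZ : \forall y \near x, forall i : 'I_N, ~ Z i y.
  apply: filter_forall => i; apply: open_nbhs_nbhs; split; first exact: closed_openC.
  by move=> Zix; apply: nZx; exists i.
rewrite /interior; near=> y.
have gy : g x / 2 < g y by near: y.
have nZy : forall i : 'I_N, ~ Z i y by near: y.
split => [/=|[j _ Zjy]]; first lra.
have [jN|Nj] := ltnP j N; first exact: nZy (Ordinal jN) Zjy.
by have := Zdel j y Zjy; have := delN j Nj => /=; lra.
Unshelve. all: by end_near.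
Qed.

Lemma weak_star_cvg_lt {R : realType} {T : ptopologicalType}
    {mu_ : nat -> {measure set borelType T -> \bar R}}
    {mu : {measure set borelType T -> \bar R}}
    {h : T -> R} {c : \bar R} :
  weak_star_cvg mu_ mu -> continuous h -> (\int[mu]_x (h x)%:E < c)%E ->
  \forall j \near \oo, (\int[mu_ j]_x (h x)%:E < c)%E.
Proof. by move=> wk ch lt; exact: wk h ch _ (open_ereal_lt' lt). Qed.

Theorem lemma2p4 (R : realType) (K : pmetricType R)
  (mu_ : nat -> {finite_measure set (borelType K) -> \bar R})
  (mu : {finite_measure set (borelType K) -> \bar R}) :
  compact [set: K] ->
  (forall j, regular_measure (mu_ j)) ->
  weak_star_cvg (fun j => mu_ j : {measure set (borelType K) -> \bar R}) mu ->
  (forall j, msupp (mu_ j) `&` msupp mu = set0) ->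
  regular_weak_star_cvg (fun j => mu_ j : {measure set (borelType K) -> \bar R}) mu.
Proof.
move=> _ reg wk disj; split => // A a Asupp Aa eps eps0.
have [U [oU AU muU]] := mu_meas_val_outer mu Aa _ eps0.
have [g [cg g_ge0 gU]] := open_positivity_set oU.
have /choice [J hJ] : forall m, exists Jm, forall j, (Jm <= j)%N ->
    (\int[mu_ j]_x (cutoff g m x)%:E < a + eps%:E)%E.
  move=> m; have := integral_cutoff_le_measure g m cg g_ge0 mu; rewrite gU.
  move=> /le_lt_trans /(_ muU) /(weak_star_cvg_lt wk (cutoff_continuous g m cg)).
  by case=> N _ hN; exists N.
pose del j : R := harmonic (diag_index J j).
pose Z j := msupp (mu_ j) `&` [set x | g x <= del j].
have oO : open ([set x | 0 < g x] `\` \bigcup_j Z j).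
  apply: (@open_setD_bigcup_shrinking _ _ g Z del cg) => [j||].
  - apply: closedI; first exact: msupp_closed.
    exact: (continuous_closedP g).1 cg _ (@closed_le _ (del j)).
  - by move=> j x [].
  - exact: cvg_comp (diag_index_cvg J) cvg_harmonic.
exists ([set x | 0 < g x] `\` \bigcup_j Z j); split => //.
- move=> x Ax; split; first by rewrite gU; exact: AU.
  move=> [j _ [suppjx _]].
  have : (msupp (mu_ j) `&` msupp mu) x by split => //; exact: Asupp.
  by rewrite disj.
- exists (J 0%N) => j j0; apply: le_lt_trans (hJ _ j (diag_index_le J j j0)).
  apply: le_trans (measure_le_integral_cutoff g _ cg g_ge0 _).
  apply: le_measure_msuppC (@metric_hausdorff _ K) (reg j) (open_borel oO) _ _.
    by apply: closed_borel; exact: (continuous_closedP g).1 cg _ (@closed_ge _ (del j)).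
  move=> x [_ nZx]; have [suppx|] := pselect (msupp (mu_ j) x); last by left.
  right; rewrite /= leNgt; apply/negP => gx.
  by apply: nZx; exists j => //; split => //; exact: ltW.
Qed.
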